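(* Let $N=\{1,\dots,n\}$ and let $\Psi_{TU}$ be the StatisticalSolution problem with instance space $\mathcal X=2^N$ (coalitions), game class $\mathbb G=\{v:2^N\to\mathbb R_{+}\}$ (all TU cooperative games on $N$), solution space $\mathbb S=\mathbb R^n$ (payoff vectors), and local loss $\lambda(S,v,\vec x)=1$ if $v(S)>\sum_{i\in S}x_i$ (i.e. $S$ blocks $\vec x$) and $\lambda(S,v,\vec x)=0$ otherwise. Then $\mathit{Sd}(\Psi_{TU})\le n$; in particular the solution dimension of TU cooperative games is $O(n)$.
   Context: A StatisticalSolution problem is a tuple $\Psi=(\mathcal X,\mathcal Y,\mathbb G,\mathbb S,\lambda)$ with $\mathbb G\subseteq\mathcal Y^{\mathcal X}$ a class of games, $\mathbb S$ a solution space and $\lambda:\mathcal X\times\mathbb G\times\mathbb S\to\{0,1\}$ a local loss. A set $C\subseteq\mathcal X$ is S-shattered in $\Psi$ if there exists a game $g\in\mathbb G$ such that for every $b:C\to\{0,1\}$ there is $s\in\mathbb S$ (depending on $b$) with $\lambda(x,g,s)=b(x)$ for all $x\in C$. The solution dimension $\mathit{Sd}(\Psi)$ is the largest size of an S-shattered set. *)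

From HB Require Import structures.
From mathcomp Require Import all_boot all_order all_algebra.
Set Implicit Arguments. Unset Strict Implicit. Unset Printing Implicit Defensive.
Import Order.TTheory GRing.Theory Num.Theory.
Local Open Scope ring_scope.

(* The game class GG is a subset of the type G (given by the
   predicate inG), SS is the type of solutions, lambda : X -> G -> SS -> bool
   is the local loss ({0,1} encoded as bool). *)
Definition S_shattered (X : finType) (G SS : Type) (inG : G -> Prop)
    (lam : X -> G -> SS -> bool) (C : {set X}) : Prop :=
  exists g : G, inG g /\
    forall b : X -> bool, exists s : SS, forall x, x \in C -> lam x g s = b x.

Definition solution_dim_le (X : finType) (G SS : Type) (inG : G -> Prop)
    (lam : X -> G -> SS -> bool) (k : nat) : Prop :=
  forall C : {set X}, S_shattered inG lam C -> (#|C| <= k)%N.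

Definition TU_game (R : realFieldType) (n : nat) := {set 'I_n} -> R.
Definition TU_class (R : realFieldType) (n : nat) (v : TU_game R n) : Prop :=
  forall S, 0 <= v S.
Definition TU_loss (R : realFieldType) (n : nat)
    (S : {set 'I_n}) (v : TU_game R n) (x : 'I_n -> R) : bool :=
  \sum_(i in S) x i < v S.

From HB Require Import structures.
From mathcomp Require Import all_boot all_order all_algebra.
Set Implicit Arguments. Unset Strict Implicit. Unset Printing Implicit Defensive.
Import Order.TTheory GRing.Theory Num.Theory.
Local Open Scope ring_scope.

(* More than n coalitions have linearly dependent indicator vectors in R^n:
   take a nonzero dependency mu.  If x realizes the labelling "S_k blocks x iff
   mu_k > 0", then sum_k mu_k v(S_k) = sum_k mu_k (v(S_k) - x(S_k)) is a sum of
   nonnegative terms, positive as soon as some mu_k > 0.  Shattering also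
   realizes the labelling for -mu, so sum_k mu_k v(S_k) is both >= 0 and <= 0,
   and one of the two inequalities is strict since mu is nonzero. *)

Section SignPattern.

Variables (R : realDomainType) (n : nat) (I : finType).
Variables (S : I -> {set 'I_n}) (mu : I -> R).
Hypothesis mu_dep : forall i : 'I_n, \sum_k mu k * (i \in S k)%:R = 0.

Lemma dependency_payoff_sum (x : 'I_n -> R) :
  \sum_k mu k * \sum_(i in S k) x i = 0.
Proof.
transitivity (\sum_k \sum_i mu k * (i \in S k)%:R * x i).
  apply: eq_bigr => k _; rewrite big_mkcond mulr_sumr.
  by apply: eq_bigr => i _; case: (i \in S k); rewrite ?mulr1 ?mulr0 ?mul0r.
rewrite exchange_big big1 // => i _.
by rewrite -mulr_suml mu_dep mul0r.
Qed.

Variables (w : I -> R) (x : 'I_n -> R).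
Hypothesis x_pattern : forall k, (\sum_(i in S k) x i < w k) = (0 < mu k).

Lemma dependency_worth_slack :
  \sum_k mu k * w k = \sum_k mu k * (w k - \sum_(i in S k) x i).
Proof.
under [RHS]eq_bigr do rewrite mulrBr.
by rewrite sumrB dependency_payoff_sum subr0.
Qed.

Lemma sign_pattern_slack_ge0 k : 0 <= mu k * (w k - \sum_(i in S k) x i).
Proof.
have := x_pattern k; case: ltrP => [blocks|no_block] sign.
  by rewrite mulr_ge0 ?subr_ge0 ?ltW // -sign.
by rewrite mulr_le0 ?subr_le0 // leNgt -sign.
Qed.

Lemma sign_pattern_worth_ge0 : 0 <= \sum_k mu k * w k.
Proof.
by rewrite dependency_worth_slack; apply: sumr_ge0 => k _; apply: sign_pattern_slack_ge0.
Qed.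

Lemma sign_pattern_worth_gt0 k0 : 0 < mu k0 -> 0 < \sum_k mu k * w k.
Proof.
move=> mu_k0_gt0; rewrite dependency_worth_slack (bigD1 k0) //=.
apply: ltr_wpDr; first by apply: sumr_ge0 => k _; apply: sign_pattern_slack_ge0.
by rewrite mulr_gt0 // subr_gt0 x_pattern.
Qed.

End SignPattern.

Lemma sign_patterns_not_both_realizable (R : realDomainType) (n : nat)
    (I : finType) (S : I -> {set 'I_n}) (mu : I -> R) (w : I -> R)
    (x1 x2 : 'I_n -> R) (k0 : I) :
  mu k0 != 0 ->
  (forall i : 'I_n, \sum_k mu k * (i \in S k)%:R = 0) ->
  (forall k, (\sum_(i in S k) x1 i < w k) = (0 < mu k)) ->
  (forall k, (\sum_(i in S k) x2 i < w k) = (0 < - mu k)) ->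
  False.
Proof.
move=> mu_k0_neq0 mu_dep x1_pattern x2_pattern.
pose nu k := - mu k.
have nu_dep i : \sum_k nu k * (i \in S k)%:R = 0.
  by under eq_bigr do rewrite mulNr; rewrite sumrN mu_dep oppr0.
have nu_worth : \sum_k nu k * w k = - \sum_k mu k * w k.
  by under eq_bigr do rewrite mulNr; rewrite sumrN.
have worth_eq0 : \sum_k mu k * w k = 0.
  apply/eqP; rewrite eq_le (sign_pattern_worth_ge0 mu_dep x1_pattern) andbT.
  by rewrite -oppr_ge0 -nu_worth (sign_pattern_worth_ge0 nu_dep x2_pattern).
move: mu_k0_neq0; rewrite neq_lt => /orP[mu_k0_lt0|mu_k0_gt0]; last first.
  by have := sign_pattern_worth_gt0 mu_dep x1_pattern mu_k0_gt0; rewrite worth_eq0 ltxx.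
have nu_k0_gt0 : 0 < nu k0 by rewrite oppr_gt0.
have := sign_pattern_worth_gt0 nu_dep x2_pattern nu_k0_gt0.
by rewrite nu_worth worth_eq0 oppr0 ltxx.
Qed.

Lemma indicator_dependency (R : fieldType) (n m : nat) (S : 'I_m -> {set 'I_n}) :
  (n < m)%N ->
  exists2 mu : 'I_m -> R, exists k0, mu k0 != 0 &
    forall i : 'I_n, \sum_k mu k * (i \in S k)%:R = 0.
Proof.
move=> n_lt_m.
pose A : 'M[R]_(m, n) := \matrix_(k, i) (i \in S k)%:R.
have : kermx A != 0.
  by rewrite kermx_eq0 -row_leq_rank -ltnNge (leq_ltn_trans (rank_leq_col A)).
case/matrix0Pn=> r [k0 ker_rk0].
exists (fun k => kermx A r k); first by exists k0.
move=> i; have /matrixP/(_ r i) := mulmx_ker A.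
rewrite !mxE => ker_r; rewrite -[RHS]ker_r.
by apply: eq_bigr => k _; rewrite [A k i]mxE.
Qed.

Theorem mainTheorem3 (R : realFieldType) (n : nat) :
  solution_dim_le (@TU_class R n) (@TU_loss R n) n.
Proof.
move=> C [v [_ shatter]]; rewrite leqNgt; apply/negP => C_large.
pose S : 'I_#|C| -> {set 'I_n} := enum_val.
have [mu [k0 mu_k0_neq0] mu_dep] := indicator_dependency R S C_large.
pose positive_on (nu : 'I_#|C| -> R) T := [exists k, (S k == T) && (0 < nu k)].
have positive_onE nu k : positive_on nu (S k) = (0 < nu k).
  apply/existsP/idP => [[k' /andP[/eqP/enum_val_inj ->]] //|nu_k_gt0].
  by exists k; rewrite eqxx.
have [x1 x1_pattern] := shatter (positive_on mu).
have [x2 x2_pattern] := shatter (positive_on (fun k => - mu k)).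
apply: (sign_patterns_not_both_realizable (w := fun k => v (S k))
  (x1 := x1) (x2 := x2) mu_k0_neq0 mu_dep) => k.
  by rewrite -positive_onE; apply: x1_pattern; apply: enum_valP.
by rewrite -(positive_onE (fun k => - mu k)); apply: x2_pattern; apply: enum_valP.
Qed.
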